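(* Let $A$ be an $m\times m$ coloring matrix all of whose row sums equal $r$. Then for every color $1\le i\le m$ and every $n\ge1$, $t_A^{(i)}(n)=r^{n-1}C_{n-1}$, and hence $t_A(n)=m\,r^{n-1}C_{n-1}$. In particular, all colors of $A$ are pairwise interchangeable, and any two $m\times m$ coloring matrices whose row sums all equal $r$ are strictly tree coloring equivalent.
   Context: A plane tree is an unlabeled rooted tree in which the children of every vertex are linearly ordered. A coloring matrix is an $m\times m$ matrix $A=(a_{ij})$ with entries in $\{0,1\}$. An $A$-coloring of a plane tree assigns to each vertex a color in $\{1,\dots,m\}$ such that whenever a vertex of color $j$ is a child of a vertex of color $i$, $a_{ij}=1$. Let $t_A(n)$ be the number of pairs (plane tree with $n$ vertices, $A$-coloring of it) and $t_A^{(i)}(n)$ the number of those with root color $i$. $C_k=\frac{1}{k+1}\binom{2k}{k}$ is the $k$-th Catalan number. Colors $i,j$ are interchangeable for $A$ if $t_A^{(i)}(n)=t_A^{(j)}(n)$ for all $n\ge1$. Two coloring matrices $A,B$ of the same size are strictly tree coloring equivalent if $t_A^{(i)}(n)=t_B^{(i)}(n)$ for all $n\ge1$ and all $i$. *)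

From mathcomp Require Import all_boot all_algebra.
From Stdlib Require Import List.
Set Implicit Arguments. Unset Strict Implicit. Unset Printing Implicit Defensive.

(* A vertex-colored plane tree: a root color and the ordered list of subtrees. *)
Inductive ctree (C : Type) : Type :=
  | CNode : C -> list (ctree C) -> ctree C.
Arguments CNode {C}.

Definition root_color {C} (t : ctree C) : C := let: CNode c _ := t in c.

Fixpoint nverts {C} (t : ctree C) : nat :=
  let: CNode _ ts := t in (fold_right (fun u acc => nverts u + acc) 0 ts).+1.

Fixpoint A_colored {m} (A : 'M[bool]_m) (t : ctree 'I_m) : Prop :=
  let: CNode i ts := t in
  (fold_right (fun u acc => (A i (root_color u) = true) /\ A_colored A u /\ acc) True ts).

Definition colored_trees_root {m} (A : 'M[bool]_m) (i : 'I_m) (n : nat)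
  (t : ctree 'I_m) : Prop :=
  nverts t = n /\ A_colored A t /\ root_color t = i.

Definition colored_trees {m} (A : 'M[bool]_m) (n : nat) (t : ctree 'I_m) : Prop :=
  nverts t = n /\ A_colored A t.

Definition card_is {T} (P : T -> Prop) (k : nat) : Prop :=
  exists s : list T, NoDup s /\ (forall x, In x s <-> P x) /\ length s = k.

Definition tA_root {m} (A : 'M[bool]_m) (i : 'I_m) (n k : nat) : Prop :=
  card_is (colored_trees_root A i n) k.
Definition tA {m} (A : 'M[bool]_m) (n k : nat) : Prop :=
  card_is (colored_trees A n) k.

Definition catalan (k : nat) : nat := 'C(k.*2, k) %/ k.+1.

Definition interchangeable {m} (A : 'M[bool]_m) (i j : 'I_m) : Prop :=
  forall n k, 1 <= n -> (tA_root A i n k <-> tA_root A j n k).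
Definition strictly_equiv {m} (A B : 'M[bool]_m) : Prop :=
  forall n i k, 1 <= n -> (tA_root A i n k <-> tA_root B i n k).

Definition row_sums_eq {m} (A : 'M[bool]_m) (r : nat) : Prop :=
  forall i : 'I_m, \sum_(j < m) (A i j : nat) = r.

From mathcomp Require Import all_boot all_algebra zify.
From Stdlib Require List FinFun.

Set Implicit Arguments. Unset Strict Implicit. Unset Printing Implicit Defensive.

(* Count more generally the A-colored plane forests whose k-th tree hangs below a
   vertex of prescribed color p_k.  Deleting the first root (of one of the r colors
   allowed below p_1) and letting its children hang below its color is a bijection
   onto such forests with one vertex fewer.  Hence every forest shape on n vertices
   carries exactly r^n colorings, and the count is r^n f(n, k), where f(n, k) is the
   number of plane forests of k trees on n vertices.  These satisfy the ballot
   recursion f(n+1, k+1) = f(n, k) + f(n+1, k+2), whence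
   f(n+1, 1) = C(2n, n) - C(2n, n+1) = C_n. *)

Lemma InP (T : eqType) (x : T) (s : seq T) : reflect (List.In x s) (x \in s).
Proof.
elim: s => [|y s IHs]; first by constructor.
rewrite in_cons; apply: (iffP orP) => [[/eqP-> | /IHs] | [-> | /IHs]]; by [left | right].
Qed.

Lemma NoDup_uniq (T : eqType) (s : seq T) : uniq s -> List.NoDup s.
Proof.
elim: s => [|x s IHs] /=; first by constructor.
by case/andP=> xNs /IHs; constructor=> // /InP; apply/negP.
Qed.

Lemma List_lengthE (T : Type) (s : seq T) : length s = size s.
Proof. by elim: s => //= x s ->. Qed.

Lemma List_filterE (T : Type) (a : pred T) (s : seq T) : List.filter a s = filter a s.
Proof. by elim: s => //= x s ->. Qed.

Lemma NoDup_flat_map_keyed (X Y : Type) (f : X -> list Y) (key : Y -> X) (l : list X) :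
  List.NoDup l -> (forall x, List.In x l -> List.NoDup (f x)) ->
  (forall x y, List.In x l -> List.In y (f x) -> key y = x) ->
  List.NoDup (List.flat_map f l).
Proof.
elim: l => [|x l IHl] /= NoDup_l NoDup_f keyK; first by constructor.
have /List.NoDup_cons_iff[xNl NoDup_l'] := NoDup_l.
apply: List.NoDup_app.
- by apply: NoDup_f; left.
- apply: IHl => // [x' lx' | x' y lx']; first by apply: NoDup_f; right.
  by apply: keyK; right.
- move=> y fx_y /List.in_flat_map[x' [lx' fx'_y]]; apply: xNl.
  by rewrite -(keyK x y (or_introl erefl) fx_y) (keyK x' y (or_intror lx') fx'_y).
Qed.

Lemma length_flat_map_seq (Y : Type) (F : nat -> list Y) n :
  length (List.flat_map F (List.seq 0 n)) = \sum_(j < n) length (F j).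
Proof.
elim: n => [|n IHn]; first by rewrite big_ord0.
by rewrite List.seq_S List.flat_map_app /= List.app_nil_r List.length_app IHn big_ord_recr plusE.
Qed.

Lemma card_is_unique (T : Type) (P : T -> Prop) k k' : card_is P k -> card_is P k' -> k = k'.
Proof.
move=> [s [NoDup_s [Ps <-]]] [s' [NoDup_s' [Ps' <-]]].
apply/eqP; rewrite eqn_leq; apply/andP; split; apply/leP; apply: List.NoDup_incl_length => // x.
  by move=> /Ps /Ps'.
by move=> /Ps' /Ps.
Qed.

Lemma same_card_is (T : Type) (P Q : T -> Prop) k0 :
  card_is P k0 -> card_is Q k0 -> forall k, card_is P k <-> card_is Q k.
Proof.
move=> Pk0 Qk0 k; split=> [Pk | Qk].
  by rewrite -(card_is_unique Pk0 Pk).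
by rewrite -(card_is_unique Qk0 Qk).
Qed.

(* The number of plane forests of [k] trees on [n] vertices: deleting the first
   root, its [j] children take its place. *)
Fixpoint forest_count (n k : nat) : nat :=
  match n with
  | 0 => if k is 0 then 1 else 0
  | n'.+1 => if k is k'.+1 then \sum_(j < n'.+1) forest_count n' (j + k') else 0
  end.

Lemma forest_count_eq0 n k : n < k -> forest_count n k = 0.
Proof.
elim: n k => [|n IHn] [|k] //= ltnk.
by rewrite big1 // => j _; apply: IHn; lia.
Qed.

Lemma forest_countSS n k :
  forest_count n.+1 k.+1 = forest_count n k + forest_count n.+1 k.+2.
Proof.
rewrite /= big_ord_recl big_ord_recr /= add0n.
rewrite [forest_count n (n + _)]forest_count_eq0; last lia.
by rewrite addn0; congr (_ + _); apply: eq_bigr => j _; rewrite /bump /= add1n addnS.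
Qed.

Lemma forest_count_diag n : forest_count n n = 1.
Proof.
elim: n => [|n IHn] //.
by rewrite forest_countSS IHn forest_count_eq0.
Qed.

(* f(n+1, k+1) = C(2n-k, n) - C(2n-k, n+1) for n = a + c, k = c, without subtraction. *)
Lemma forest_count_ballot a c :
  forest_count (a + c).+1 c.+1 + 'C(a + a + c, (a + c).+1) = 'C(a + a + c, a + c).
Proof.
elim: a c => [|a IHa] c; first by rewrite !add0n forest_count_diag bin_small // binn.
rewrite (_ : a.+1 + a.+1 + c = (a + a + c).+2) ?addSn; last lia.
elim: c => [|c IHc].
  have IH1 := IHa 1; rewrite !addn1 !addn0 in IH1 *.
  rewrite forest_countSS (binS (a + a).+1 a.+1) (binS (a + a).+1 a).
  have -> : 'C((a + a).+1, a) = 'C((a + a).+1, a.+1).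
    by rewrite -bin_sub; [congr 'C(_, _) | ]; lia.
  have -> : forest_count a.+1 0 = 0 by [].
  lia.
have IHa' := IHa c.+2.
rewrite !addnS in IHa' IHc *.
rewrite forest_countSS.
rewrite (binS (a + a + c).+2 (a + c).+2) (binS (a + a + c).+2 (a + c).+1).
lia.
Qed.

Lemma forest_count_catalan n : forest_count n.+1 1 = catalan n.
Proof.
have := forest_count_ballot n 0; rewrite !addn0 => ballot.
have := mul_bin_left (n + n) n; rewrite addnK => shift.
have central : 'C(n + n, n) = forest_count n.+1 1 * n.+1 by nia.
by rewrite /catalan -addnn central mulnK.
Qed.

Definition forest_size {C} (fs : list (ctree C)) : nat :=
  List.fold_right (fun t acc => nverts t + acc) 0 fs.

Lemma forest_size_cat C (fs1 fs2 : list (ctree C)) :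
  forest_size (fs1 ++ fs2)%list = forest_size fs1 + forest_size fs2.
Proof. by elim: fs1 => //= t fs1 ->; rewrite addnA. Qed.

Lemma length_le_forest_size C (fs : list (ctree C)) : length fs <= forest_size fs.
Proof.
elim: fs => //= -[c kids] fs IHfs.
by rewrite /= addSn ltnS (leq_trans IHfs) ?leq_addl.
Qed.

Lemma nverts_node C (c : C) kids : nverts (CNode c kids) = (forest_size kids).+1.
Proof. by []. Qed.

Lemma forest_size_node C (c : C) kids fs :
  forest_size (CNode c kids :: fs) = (forest_size kids + forest_size fs).+1.
Proof. exact: addSn. Qed.

Section ColoredForests.

Variables (m : nat) (A : 'M[bool]_m).

(* The k-th tree of [fs] hangs below a (virtual) vertex of color [ps_k]. *)
Fixpoint colored_forest (ps : list 'I_m) (fs : list (ctree 'I_m)) : Prop :=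
  match ps, fs with
  | nil, nil => True
  | p :: ps', t :: fs' => A p (root_color t) /\ A_colored A t /\ colored_forest ps' fs'
  | _, _ => False
  end.

Lemma colored_forest_length ps fs : colored_forest ps fs -> length fs = length ps.
Proof. by elim: ps fs => [|p ps IHps] [|t fs] //= [_ [_ /IHps->]]. Qed.

Lemma colored_forest_cat ps1 ps2 fs1 fs2 :
  colored_forest ps1 fs1 -> colored_forest ps2 fs2 ->
  colored_forest (ps1 ++ ps2)%list (fs1 ++ fs2)%list.
Proof.
elim: ps1 fs1 => [|p ps1 IHps] [|t fs1] //= [Apt [At col1]] col2.
by do !split => //; apply: IHps.
Qed.

Lemma colored_forest_split ps1 ps2 fs :
  colored_forest (ps1 ++ ps2)%list fs ->
  colored_forest ps1 (List.firstn (length ps1) fs) /\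
  colored_forest ps2 (List.skipn (length ps1) fs).
Proof.
elim: ps1 fs => [|p ps1 IHps] [|t fs] //= [Apt [At /IHps[col1 col2]]]; by do !split.
Qed.

Lemma A_colored_node c kids :
  A_colored A (CNode c kids) <-> colored_forest (List.repeat c (length kids)) kids.
Proof.
elim: kids => [|t kids IHkids] //=.
by split=> -[Act [At /IHkids col]]; do !split.
Qed.

Definition child_colors (p : 'I_m) : list 'I_m := List.filter (A p) (enum 'I_m).

Lemma in_child_colors p c : List.In c (child_colors p) <-> A p c.
Proof.
rewrite List.filter_In; split=> [[] // | Apc]; split=> //.
by apply/InP; rewrite mem_enum.
Qed.

Lemma NoDup_child_colors p : List.NoDup (child_colors p).
Proof. exact/List.NoDup_filter/NoDup_uniq/enum_uniq. Qed.

Lemma length_child_colors r p : row_sums_eq A r -> length (child_colors p) = r.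
Proof.
move=> rowA; rewrite /child_colors List_filterE List_lengthE size_filter -(rowA p).
by rewrite -sum1_count big_mkcond big_enum.
Qed.

Definition graft (c : 'I_m) (j : nat) (fs : list (ctree 'I_m)) : list (ctree 'I_m) :=
  CNode c (List.firstn j fs) :: List.skipn j fs.

Lemma graft_cat c kids fs : graft c (length kids) (kids ++ fs)%list = CNode c kids :: fs.
Proof.
rewrite /graft List.firstn_app List.skipn_app List.firstn_all List.skipn_all.
by rewrite minusE subnn List.app_nil_r.
Qed.

Lemma forest_size_graft c j fs : forest_size (graft c j fs) = (forest_size fs).+1.
Proof. by rewrite -{2}(List.firstn_skipn j fs) forest_size_cat. Qed.

Lemma graft_colored p ps c j fs :
  A p c -> colored_forest (List.repeat c j ++ ps)%list fs ->
  colored_forest (p :: ps) (graft c j fs).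
Proof.
move=> Apc col; have := colored_forest_length col.
rewrite List.length_app List.repeat_length => len_fs.
have [kids_col fs_col] := colored_forest_split col.
rewrite List.repeat_length in kids_col fs_col.
do !split => //; apply/A_colored_node.
by rewrite List.length_firstn (_ : Nat.min j (length fs) = j) //; lia.
Qed.

(* Deleting the first root, of color c and with j children, leaves a forest
   with one vertex fewer whose first j trees hang below c; [graft] undoes this. *)
Fixpoint colored_forests (n : nat) (ps : list 'I_m) : list (list (ctree 'I_m)) :=
  match n, ps with
  | 0, nil => [:: nil]
  | n'.+1, p :: ps' =>
    List.flat_map (fun c => List.flat_map (fun j =>
      List.map (graft c j) (colored_forests n' (List.repeat c j ++ ps')%list))
      (List.seq 0 n'.+1)) (child_colors p)
  | _, _ => nil
  end.

Lemma colored_forestsS n p ps :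
  colored_forests n.+1 (p :: ps) =
  List.flat_map (fun c => List.flat_map (fun j =>
    List.map (graft c j) (colored_forests n (List.repeat c j ++ ps)%list))
    (List.seq 0 n.+1)) (child_colors p).
Proof. by []. Qed.

Lemma in_colored_forests n ps fs :
  List.In fs (colored_forests n ps) <-> colored_forest ps fs /\ forest_size fs = n.
Proof.
elim: n ps fs => [|n IHn] [|p ps] fs.
- case: fs => [|t fs] /=; first by split=> _; [split | left].
  by split=> [[] | []].
- by split=> [[] | []]; case: fs => [|[c kids] fs].
- by split=> [[] | []]; case: fs.
rewrite colored_forestsS; split.
  move=> /List.in_flat_map[c [/in_child_colors Apc /List.in_flat_map[j [_]]]].
  move=> /List.in_map_iff[fs0 [<- /IHn[col size_fs0]]].
  by rewrite forest_size_graft size_fs0; split=> //; apply: graft_colored col.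
case: fs => [[[] _] | [c kids] fs [[Apc [/A_colored_node col_kids col_fs]]]].
rewrite forest_size_node => -[size_fs].
apply/List.in_flat_map; exists c; split; first exact/in_child_colors.
apply/List.in_flat_map; exists (length kids); split.
  by apply/List.in_seq; have := length_le_forest_size kids; lia.
apply/List.in_map_iff; exists (kids ++ fs)%list; split; first exact: graft_cat.
apply/IHn; split; first exact: colored_forest_cat.
by rewrite forest_size_cat.
Qed.

Lemma NoDup_colored_forests n ps : List.NoDup (colored_forests n ps).
Proof.
elim: n ps => [|n IHn] [|p ps]; try by repeat constructor.
rewrite colored_forestsS.
apply: (@NoDup_flat_map_keyed _ _ _ (fun fs => if fs is t :: _ then root_color t else p)).
- exact: NoDup_child_colors.
- move=> c _.
  apply: (@NoDup_flat_map_keyed _ _ _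
           (fun fs => if fs is CNode _ kids :: _ then length kids else 0)).
  + exact: List.seq_NoDup.
  + move=> j _; apply: FinFun.Injective_map_NoDup => // fs fs' [kids_eq rest_eq].
    by rewrite -(List.firstn_skipn j fs) -(List.firstn_skipn j fs') kids_eq rest_eq.
  + move=> j _ _ /List.in_map_iff[fs [<- /in_colored_forests[col _]]].
    have := colored_forest_length col; rewrite List.length_app List.repeat_length /=.
    by rewrite List.length_firstn; lia.
- by move=> c _ _ /List.in_flat_map[j [_ /List.in_map_iff[fs [<- _]]]].
Qed.

Lemma length_colored_forests r n ps : row_sums_eq A r ->
  length (colored_forests n ps) = r ^ n * forest_count n (length ps).
Proof.
move=> rowA; elim: n ps => [|n IHn] [|p ps]; rewrite ?muln0 ?muln1 //.
rewrite colored_forestsS.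
rewrite (List.flat_map_constant_length (c := r ^ n * forest_count n.+1 (length ps).+1)).
  by rewrite (length_child_colors p rowA) multE expnS mulnA.
move=> c _; rewrite length_flat_map_seq big_distrr /=.
by apply: eq_bigr => j _; rewrite List.length_map IHn List.length_app List.repeat_length.
Qed.

Definition rooted_trees (i : 'I_m) (n : nat) : list (ctree 'I_m) :=
  if n is n'.+1 then
    List.map (CNode i)
      (List.flat_map (fun j => colored_forests n' (List.repeat i j)) (List.seq 0 n))
  else nil.

Lemma in_rooted_trees i n t : List.In t (rooted_trees i n) <-> colored_trees_root A i n t.
Proof.
case: n => [|n]; first by split=> [[] | []]; case: t.
rewrite List.in_map_iff; split.
  move=> [kids [<- /List.in_flat_map[j [_ /in_colored_forests[col size_kids]]]]].
  have := colored_forest_length col; rewrite List.repeat_length => len_kids.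
  by do !split; rewrite /= -?size_kids //; apply/A_colored_node; rewrite len_kids.
case: t => c kids [+ [/A_colored_node col <-]]; rewrite nverts_node => -[size_kids].
exists kids; split=> //; apply/List.in_flat_map; exists (length kids); split.
  by apply/List.in_seq; have := length_le_forest_size kids; lia.
exact/in_colored_forests.
Qed.

Lemma NoDup_rooted_trees i n : List.NoDup (rooted_trees i n).
Proof.
case: n => [|n]; first by constructor.
apply: FinFun.Injective_map_NoDup; first by move=> kids kids' [].
apply: (@NoDup_flat_map_keyed _ _ _ (@length (ctree 'I_m))); first exact: List.seq_NoDup.
  by move=> j _; apply: NoDup_colored_forests.
move=> j kids _ /in_colored_forests[col _].
by rewrite (colored_forest_length col) List.repeat_length.
Qed.

Lemma length_rooted_trees r i n : row_sums_eq A r ->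
  length (rooted_trees i n.+1) = r ^ n * catalan n.
Proof.
move=> rowA; rewrite -forest_count_catalan List.length_map length_flat_map_seq.
rewrite [forest_count _ _]/= big_distrr.
by apply: eq_bigr => j _; rewrite (length_colored_forests _ _ rowA) List.repeat_length addn0.
Qed.

Lemma tA_root_row_sums r : row_sums_eq A r ->
  forall i n, 1 <= n -> tA_root A i n (r ^ n.-1 * catalan n.-1).
Proof.
move=> rowA i [|n] // _; exists (rooted_trees i n.+1).
split; first exact: NoDup_rooted_trees.
by split; [exact: in_rooted_trees | exact: length_rooted_trees].
Qed.

Lemma tA_row_sums r : row_sums_eq A r ->
  forall n, 1 <= n -> tA A n (m * (r ^ n.-1 * catalan n.-1)).
Proof.
move=> rowA [|n] // _; exists (List.flat_map (rooted_trees^~ n.+1) (enum 'I_m)); split.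
  apply: (@NoDup_flat_map_keyed _ _ _ root_color).
  - exact/NoDup_uniq/enum_uniq.
  - by move=> i _; apply: NoDup_rooted_trees.
  - by move=> i t _ /in_rooted_trees[_ [_ ->]].
split=> [t | ].
  rewrite List.in_flat_map; split.
    by move=> [i [_ /in_rooted_trees[size_t [col_t _]]]].
  move=> [size_t col_t]; exists (root_color t); split; first by apply/InP; rewrite mem_enum.
  exact/in_rooted_trees.
rewrite (List.flat_map_constant_length (c := r ^ n * catalan n)).
  by rewrite List_lengthE size_enum_ord.
by move=> i _; apply: length_rooted_trees.
Qed.

End ColoredForests.

Theorem theorem20 (m r : nat) (A : 'M[bool]_m) :
  row_sums_eq A r ->
  (forall (i : 'I_m) (n : nat), 1 <= n -> tA_root A i n (r ^ n.-1 * catalan n.-1)) /\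
  (forall n : nat, 1 <= n -> tA A n (m * (r ^ n.-1 * catalan n.-1))) /\
  (forall i j : 'I_m, interchangeable A i j) /\
  (forall B : 'M[bool]_m, row_sums_eq B r -> strictly_equiv A B).
Proof.
move=> rowA; have tA_rootA := tA_root_row_sums rowA.
split; first exact: tA_rootA.
split; first exact: tA_row_sums rowA.
split=> [i j n k n_gt0 | B rowB n i k n_gt0]; apply: same_card_is.
- exact: tA_rootA i n n_gt0.
- exact: tA_rootA j n n_gt0.
- exact: tA_rootA i n n_gt0.
- exact: tA_root_row_sums rowB i n n_gt0.
Qed.
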